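(* Let $L\subseteq \mathbb{K}^{2n}\oplus\mathbb{K}^{2m}$ be a nonempty affine Lagrangian relation $L:n\to m$. Then there exist $k\in\mathbb{N}$ with $k\le \min(n,m)$, an affine symplectomorphism $S$ of $(\mathbb{K}^{2n},\omega_n)$ and an affine symplectomorphism $T$ of $(\mathbb{K}^{2m},\omega_m)$ such that \[ L=\Gamma_T\circ\big(\mathrm{id}_{k}\oplus P_{m-k}\big)\circ\big(\mathrm{id}_{k}\oplus P_{n-k}^{\dagger}\big)\circ\Gamma_S, \] i.e. \[ L=\Big\{\big(v,\;T(u\oplus p)\big)\;\Big|\; v\in\mathbb{K}^{2n},\ u\in\mathbb{K}^{2k},\ p\in P_{m-k},\ \exists q\in P_{n-k}:\ S v=u\oplus q\Big\}. \] Moreover, if $L$ is a (nonempty) linear Lagrangian relation, $S$ and $T$ can be chosen to be linear symplectomorphisms.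
   Context: $\mathbb{K}$ is an arbitrary field. For $n\in\mathbb{N}$, $\mathbb{K}^{2n}=\bigoplus_{j=0}^{n-1}\mathbb{K}^2$ with coordinates $(z_j,x_j)$ carries the symplectic form $\omega_n\big(\bigoplus_j (z_j,x_j),\bigoplus_j(z'_j,x'_j)\big)=\sum_j (z_jx'_j-x_jz'_j)$. A relation $n\to m$ is a subset of $\mathbb{K}^{2n}\oplus\mathbb{K}^{2m}$, which is given the symplectic form $((v,w),(v',w'))\mapsto \omega_n(v,v')-\omega_m(w,w')$. For a linear subspace $S$ of a symplectic space $(V,\omega)$, $S^\omega=\{v: \omega(v,s)=0\ \forall s\in S\}$; $S$ is Lagrangian if $S=S^\omega$. An affine subspace (possibly empty) is Lagrangian if it is empty or its underlying linear subspace (direction) is Lagrangian; an affine (resp. linear) Lagrangian relation $n\to m$ is an affine (resp. linear) Lagrangian subspace of $\mathbb{K}^{2n}\oplus\mathbb{K}^{2m}$. Relations compose by relational composition $S\circ R=\{(a,c):\exists b,\ (a,b)\in R,(b,c)\in S\}$; $\oplus$ of relations is the direct sum (cartesian product, with coordinates concatenated), and $\mathrm{id}_k$ is the diagonal of $\mathbb{K}^{2k}$. An affine symplectomorphism is an affine bijection whose linear part preserves the symplectic form; $\Gamma_S=\{(v,Sv)\}$ denotes its graph. $P_r=\{\bigoplus_{j=0}^{r-1}(0,x_j): x_j\in\mathbb{K}\}\subseteq\mathbb{K}^{2r}$, viewed as a relation $0\to r$; for a relation $R:n\to m$, its dagger $R^\dagger:m\to n$ is $\{(\bigoplus_j(z_j,-x_j),\bigoplus_k(z'_k,-x'_k))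 : (\bigoplus_k(z'_k,x'_k),\bigoplus_j(z_j,x_j))\in R\}$, so $P_r^\dagger:r\to 0$. *)

From HB Require Import structures.
From mathcomp Require Import all_boot all_order all_algebra.
Set Implicit Arguments. Unset Strict Implicit. Unset Printing Implicit Defensive.
Import GRing.Theory.
Local Open Scope ring_scope.

Section SympDefs.
Variable K : fieldType.

(* K^{2n} = (+)_{j<n} K^2, coordinates (z_j, x_j) = (v j).1, (v j).2 *)
Definition vec (n : nat) := 'I_n -> K * K.

Definition vzero n : vec n := fun _ => (0, 0).
Definition vadd n (v w : vec n) : vec n := fun j => ((v j).1 + (w j).1, (v j).2 + (w j).2).
Definition vopp n (v : vec n) : vec n := fun j => (- (v j).1, - (v j).2).
Definition vscale n (a : K) (v : vec n) : vec n := fun j => (a * (v j).1, a * (v j).2).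

Definition omega n (v w : vec n) : K :=
  \sum_(j < n) ((v j).1 * (w j).2 - (v j).2 * (w j).1).

(* direct sum u (+) q : K^{2k} (+) K^{2l} -> K^{2n}, used with l = n - k, k <= n *)
Definition vcat k l n (u : vec k) (q : vec l) : vec n := fun j =>
  match (insub (nat_of_ord j) : option 'I_k) with
  | Some i => u i
  | None => match (insub (nat_of_ord j - k)%N : option 'I_l) with
            | Some i => q i
            | None => (0, 0)
            end
  end.

Definition is_linmap n m (f : vec n -> vec m) : Prop :=
  (forall v w, f (vadd v w) = vadd (f v) (f w)) /\
  (forall a v, f (vscale a v) = vscale a (f v)).

Definition affine_symplecto n (S : vec n -> vec n) : Prop :=
  bijective S /\
  exists (A : vec n -> vec n) (b : vec n),
    is_linmap A /\ (forall v, S v = vadd (A v) b) /\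
    (forall v w, omega (A v) (A w) = omega v w).

Definition linear_symplecto n (S : vec n -> vec n) : Prop :=
  bijective S /\ is_linmap S /\ (forall v w, omega (S v) (S w) = omega v w).

Definition relation n m := vec n -> vec m -> Prop.

Definition rel_form n m (v w : vec n) (v' w' : vec m) : K :=
  omega v w - omega v' w'.

Definition is_linear_subspace n m (D : relation n m) : Prop :=
  D (@vzero n) (@vzero m) /\
  (forall v w v' w', D v v' -> D w w' -> D (vadd v w) (vadd v' w')) /\
  (forall a v v', D v v' -> D (vscale a v) (vscale a v')).

Definition is_lagrangian_subspace n m (D : relation n m) : Prop :=
  is_linear_subspace D /\
  forall v v', D v v' <-> (forall w w', D w w' -> rel_form v w v' w' = 0).

Definition linear_lagrangian_relation n m (L : relation n m) : Prop :=
  is_lagrangian_subspace L.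

Definition affine_lagrangian_relation n m (L : relation n m) : Prop :=
  (forall v v', ~ L v v') \/
  exists (a : vec n) (a' : vec m) (D : relation n m),
    is_lagrangian_subspace D /\
    forall v v', L v v' <-> D (vadd v (vopp a)) (vadd v' (vopp a')).

Definition inP r (p : vec r) : Prop := forall j, (p j).1 = 0.

Definition normal_form n m (k : nat) (S : vec n -> vec n) (T : vec m -> vec m) : relation n m :=
  fun v w => exists (u : vec k) (p : vec (m - k)) (q : vec (n - k)),
    inP p /\ inP q /\ S v = @vcat k (n - k) n u q /\ w = T (@vcat k (m - k) m u p).

End SympDefs.

(* Linear case, by induction on n + m.  If a Lagrangian relation L contains
   (v, 0) with v <> 0, a symplectomorphism (a product of transvections) moves v
   to the last x-axis vector; L then splits as a smaller Lagrangian relation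
   times P^dagger on the last coordinate.  The case (0, w) is the transposed
   one.  Otherwise both kernels are trivial and nondegeneracy yields
   (v, w), (v', w') in L with omega(v, v') = omega(w, w') = 1; moving these
   pairs to the first standard symplectic pair on both sides splits off a
   copy of id_1.  The affine case translates a linear Lagrangian relation. *)

From mathcomp Require Import all_boot all_order all_algebra.
From mathcomp Require Import ring zify.
From Stdlib Require Import Classical FunctionalExtensionality.
Set Implicit Arguments. Unset Strict Implicit. Unset Printing Implicit Defensive.
Import GRing.Theory.
Local Open Scope ring_scope.

Section Coordinates.
Variable K : fieldType.
Local Notation vec := (vec K).
Local Notation vz := (@vzero K _).

(* Coordinates are read at natural-number indices and are [0] out of range;
   this lets vectors of different lengths be compared coordinatewise. *)
Definition vget n (v : vec n) (i : nat) : K * K :=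
  if insub i is Some j then v j else (0, 0).
Definition zc n (v : vec n) i := (vget v i).1.
Definition xc n (v : vec n) i := (vget v i).2.
Definition vmk n (Z X : nat -> K) : vec n := fun j => (Z j, X j).
Arguments vmk : clear implicits.

Lemma vgetE n (v : vec n) (j : 'I_n) : vget v j = v j.
Proof. by rewrite /vget valK. Qed.

Lemma zc_vmk n Z X i : zc (vmk n Z X) i = if (i < n)%N then Z i else 0.
Proof. by rewrite /zc /vget; case: insubP => [j -> Hv|/negbTE ->] /=; rewrite ?Hv. Qed.
Lemma xc_vmk n Z X i : xc (vmk n Z X) i = if (i < n)%N then X i else 0.
Proof. by rewrite /xc /vget; case: insubP => [j -> Hv|/negbTE ->] /=; rewrite ?Hv. Qed.

Lemma zc_out n (v : vec n) i : (n <= i)%N -> zc v i = 0.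
Proof. by move=> H; rewrite /zc /vget insubN // -leqNgt. Qed.
Lemma xc_out n (v : vec n) i : (n <= i)%N -> xc v i = 0.
Proof. by move=> H; rewrite /xc /vget insubN // -leqNgt. Qed.

Lemma vec_ext n (v w : vec n) :
  (forall i, (i < n)%N -> zc v i = zc w i) ->
  (forall i, (i < n)%N -> xc v i = xc w i) -> v = w.
Proof.
move=> Hz Hx; apply: functional_extensionality => j.
move: (Hz j (ltn_ord j)) (Hx j (ltn_ord j)); rewrite /zc /xc !vgetE.
by case: (v j) (w j) => [a b] [c d] /= -> ->.
Qed.

Lemma vec0_eq (v : vec 0) : v = vz.
Proof. by apply: vec_ext. Qed.

Lemma zc_vadd n (v w : vec n) i : zc (vadd v w) i = zc v i + zc w i.
Proof. by rewrite /zc /vget; case: insubP => //= *; rewrite addr0. Qed.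
Lemma xc_vadd n (v w : vec n) i : xc (vadd v w) i = xc v i + xc w i.
Proof. by rewrite /xc /vget; case: insubP => //= *; rewrite addr0. Qed.
Lemma zc_vscale n a (v : vec n) i : zc (vscale a v) i = a * zc v i.
Proof. by rewrite /zc /vget; case: insubP => //= *; rewrite mulr0. Qed.
Lemma xc_vscale n a (v : vec n) i : xc (vscale a v) i = a * xc v i.
Proof. by rewrite /xc /vget; case: insubP => //= *; rewrite mulr0. Qed.
Lemma zc_vopp n (v : vec n) i : zc (vopp v) i = - zc v i.
Proof. by rewrite /zc /vget; case: insubP => //= *; rewrite oppr0. Qed.
Lemma xc_vopp n (v : vec n) i : xc (vopp v) i = - xc v i.
Proof. by rewrite /xc /vget; case: insubP => //= *; rewrite oppr0. Qed.
Lemma zc_vzero n i : zc (@vzero K n) i = 0.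
Proof. by rewrite /zc /vget; case: insubP. Qed.
Lemma xc_vzero n i : xc (@vzero K n) i = 0.
Proof. by rewrite /xc /vget; case: insubP. Qed.

Definition coordE := (zc_vadd, zc_vscale, zc_vopp, zc_vzero,
                      xc_vadd, xc_vscale, xc_vopp, xc_vzero).

Lemma vaddNK n (u a : vec n) : vadd (vadd u (vopp a)) a = u.
Proof. by apply: vec_ext => i _; rewrite !coordE; ring. Qed.
Lemma vaddK n (u a : vec n) : vadd (vadd u a) (vopp a) = u.
Proof. by apply: vec_ext => i _; rewrite !coordE; ring. Qed.

Lemma omega_coord n (v w : vec n) :
  omega v w = \sum_(i < n) (zc v i * xc w i - xc v i * zc w i).
Proof. by apply: eq_bigr => i _; rewrite /zc /xc !vgetE. Qed.

Lemma omegaDl n (u v w : vec n) : omega (vadd u v) w = omega u w + omega v w.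
Proof. by rewrite !omega_coord -big_split; apply: eq_bigr => i _; rewrite /= !coordE; ring. Qed.
Lemma omegaDr n (u v w : vec n) : omega w (vadd u v) = omega w u + omega w v.
Proof. by rewrite !omega_coord -big_split; apply: eq_bigr => i _; rewrite /= !coordE; ring. Qed.
Lemma omegaZl n a (v w : vec n) : omega (vscale a v) w = a * omega v w.
Proof. by rewrite !omega_coord mulr_sumr; apply: eq_bigr => i _; rewrite /= !coordE; ring. Qed.
Lemma omegaZr n a (v w : vec n) : omega w (vscale a v) = a * omega w v.
Proof. by rewrite !omega_coord mulr_sumr; apply: eq_bigr => i _; rewrite /= !coordE; ring. Qed.
Lemma omegaNl n (v w : vec n) : omega (vopp v) w = - omega v w.
Proof. by rewrite !omega_coord -sumrN; apply: eq_bigr => i _; rewrite /= !coordE; ring. Qed.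
Lemma omegaC n (v w : vec n) : omega v w = - omega w v.
Proof. by rewrite !omega_coord -sumrN; apply: eq_bigr => i _; ring. Qed.
Lemma omegavv n (v : vec n) : omega v v = 0.
Proof. by rewrite omega_coord big1 // => i _; ring. Qed.
Lemma omega0l n (v : vec n) : omega vz v = 0.
Proof. by rewrite omega_coord big1 // => i _; rewrite !coordE; ring. Qed.
Lemma omega0r n (v : vec n) : omega v vz = 0.
Proof. by rewrite omegaC omega0l oppr0. Qed.

Definition zunit n j : vec n := vmk n (fun i => (i == j)%:R) (fun _ => 0).
Definition xunit n j : vec n := vmk n (fun _ => 0) (fun i => (i == j)%:R).
Arguments zunit : clear implicits.
Arguments xunit : clear implicits.

Lemma sum_delta n (G : nat -> K) j : (j < n)%N ->
  \sum_(i < n) G i * (val i == j)%:R = G j.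
Proof.
move=> Hj; rewrite (bigD1 (Ordinal Hj)) //= eqxx mulr1 big1 ?addr0 // => i Hi.
by rewrite -(inj_eq val_inj) /= in Hi; rewrite (negbTE Hi) mulr0.
Qed.

Lemma omega_xunit n (v : vec n) j : (j < n)%N -> omega v (xunit n j) = zc v j.
Proof.
move=> Hj; rewrite omega_coord -(sum_delta (zc v) Hj); apply: eq_bigr => i _.
by rewrite zc_vmk xc_vmk ltn_ord; ring.
Qed.
Lemma omega_zunit n (v : vec n) j : (j < n)%N -> omega v (zunit n j) = - xc v j.
Proof.
move=> Hj; rewrite omega_coord -(sum_delta (fun i => - xc v i) Hj).
by apply: eq_bigr => i _; rewrite zc_vmk xc_vmk ltn_ord; ring.
Qed.

Lemma omega_zunit_xunit n j : (j < n)%N -> omega (zunit n j) (xunit n j) = 1.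
Proof. by move=> Hj; rewrite omega_xunit // zc_vmk Hj eqxx. Qed.

Lemma omega_ne0_neq0 n (x y : vec n) : omega x y != 0 -> x <> vz.
Proof. by move=> H E; move: H; rewrite E omega0l eqxx. Qed.

Lemma xunit_neq0 n j : (j < n)%N -> xunit n j <> vz.
Proof.
move=> Hj; apply: (@omega_ne0_neq0 _ _ (zunit n j)).
by rewrite omegaC omega_zunit_xunit // oppr_eq0 oner_eq0.
Qed.
Lemma zunit_neq0 n j : (j < n)%N -> zunit n j <> vz.
Proof.
by move=> Hj; apply: (@omega_ne0_neq0 _ _ (xunit n j)); rewrite omega_zunit_xunit ?oner_eq0.
Qed.

Lemma omega_nondegenerate n (x : vec n) : x <> vz -> exists a, omega x a != 0.
Proof.
move=> Hx; apply: NNPP => Hn; apply: Hx.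
have H0 a : omega x a = 0.
  by apply/eqP; apply: negbNE; apply/negP => Ha; apply: Hn; exists a.
apply: vec_ext => i Hi; rewrite coordE.
  by rewrite -omega_xunit // H0.
by rewrite -[xc x i]opprK -omega_zunit // H0 oppr0.
Qed.

End Coordinates.
Arguments vmk {K} n Z X.
Arguments zunit {K} n j.
Arguments xunit {K} n j.

Section Symplectomorphisms.
Variable K : fieldType.
Local Notation vec := (vec K).
Local Notation vz := (@vzero K _).

Lemma linmap0 n m (f : vec n -> vec m) : is_linmap f -> f vz = vz.
Proof.
have vscale0 k (v : vec k) : vscale 0 v = vz.
  by apply: vec_ext => i _; rewrite !coordE mul0r.
by case=> _ Hs; rewrite -(vscale0 _ vz) Hs vscale0.
Qed.

Lemma linsymp_id n : linear_symplecto (fun v : vec n => v).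
Proof. by split; [exists id | split]. Qed.

Lemma linsymp_comp n (S T : vec n -> vec n) :
  linear_symplecto S -> linear_symplecto T -> linear_symplecto (fun v => T (S v)).
Proof.
case=> bijS [[addS scaleS] omS] [bijT [[addT scaleT] omT]]; split.
  exact: bij_comp bijT bijS.
split; first split.
- by move=> v w; rewrite addS addT.
- by move=> a v; rewrite scaleS scaleT.
by move=> v w; rewrite omT omS.
Qed.

Lemma linsymp_can n (S Si : vec n -> vec n) :
  linear_symplecto S -> cancel S Si -> cancel Si S -> linear_symplecto Si.
Proof.
case=> _ [[addS scaleS] omS] SK SiK; split; first by exists S.
split; first split.
- by move=> v w; apply: (can_inj SK); rewrite addS !SiK.
- by move=> a v; apply: (can_inj SK); rewrite scaleS !SiK.
by move=> v w; rewrite -omS !SiK.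
Qed.

Lemma linsymp_inverse n (S : vec n -> vec n) : linear_symplecto S ->
  exists Si, [/\ linear_symplecto Si, cancel S Si & cancel Si S].
Proof.
move=> HS; have [[Si SK SiK] _] := HS.
by exists Si; split => //; apply: linsymp_can HS SK SiK.
Qed.

Definition vsub n (x y : vec n) := vadd x (vopp y).

Definition transvection n (u : vec n) (c : K) (x : vec n) :=
  vadd x (vscale (c * omega u x) u).

Lemma transvection_linsymp n (u : vec n) c : linear_symplecto (transvection u c).
Proof.
have omega_u d (x : vec n) : omega u (transvection u d x) = omega u x.
  by rewrite omegaDr omegaZr omegavv mulr0 addr0.
split.
  by exists (transvection u (- c)) => x; rewrite {1}/transvection omega_u;
    apply: vec_ext => i _; rewrite /transvection !coordE; ring.
split; first split.
- by move=> v w; apply: vec_ext => i _; rewrite /transvection !coordE omegaDr; ring.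
- by move=> a v; apply: vec_ext => i _; rewrite /transvection !coordE omegaZr; ring.
move=> v w; rewrite /transvection !omegaDl !omegaDr !omegaZl !omegaZr omegavv.
by rewrite (omegaC v u); ring.
Qed.

Lemma transvection_fix n (u : vec n) c w : omega u w = 0 -> transvection u c w = w.
Proof. by move=> H; apply: vec_ext => i _; rewrite /transvection !coordE H; ring. Qed.

Lemma transvection_move n (x y : vec n) :
  omega y x != 0 -> transvection (vsub y x) (omega y x)^-1 x = y.
Proof.
move=> H; have E : omega (vsub y x) x = omega y x.
  by rewrite omegaDl omegaNl omegavv oppr0 addr0.
by apply: vec_ext => i _; rewrite /transvection E mulVf // !coordE; ring.
Qed.

Lemma linsymp_transitive n (x y : vec n) : x <> vz -> y <> vz ->
  exists S, linear_symplecto S /\ S x = y.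
Proof.
move=> Hx Hy.
have step (x' y' : vec n) : omega y' x' != 0 -> exists S, linear_symplecto S /\ S x' = y'.
  by move=> H; exists (transvection (vsub y' x') (omega y' x')^-1);
    split; [apply: transvection_linsymp | apply: transvection_move].
have omega_sym (a b : vec n) : omega a b != 0 -> omega b a != 0 by rewrite (omegaC b) oppr_eq0.
have [Hyx|Hyx] := eqVneq (omega y x) 0; last exact: step.
have [a Ha] := omega_nondegenerate Hx; have [b Hb] := omega_nondegenerate Hy.
have [z [Hzx Hyz]] : exists z, omega z x != 0 /\ omega y z != 0.
  have [Hya|Hya] := eqVneq (omega y a) 0; last by exists a; split => //; apply: omega_sym.
  have [Hbx|Hbx] := eqVneq (omega b x) 0; last by exists b.
  exists (vadd a b); rewrite omegaDl omegaDr Hbx Hya addr0 add0r.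
  by split => //; apply: omega_sym.
have [S1 [HS1 E1]] := step _ _ Hzx; have [S2 [HS2 E2]] := step _ _ Hyz.
by exists (fun v => S2 (S1 v)); split; [apply: linsymp_comp | rewrite E1 E2].
Qed.

Lemma linsymp_to_unit_pair n (v v' : vec n.+1) : omega v v' = 1 ->
  exists S, [/\ linear_symplecto S, S v = zunit n.+1 0 & S v' = xunit n.+1 0].
Proof.
move=> Hvv; set e := zunit n.+1 0; set f := xunit n.+1 0.
have Hef : omega e f = 1 by apply: omega_zunit_xunit.
have Hfe : omega f e = -1 by rewrite omegaC Hef.
have Hv : v <> vz by apply: (@omega_ne0_neq0 _ _ v v'); rewrite Hvv oner_eq0.
have [S1 [HS1 E1]] := linsymp_transitive Hv (zunit_neq0 (ltn0Sn n)); rewrite -/e in E1.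
set y := S1 v'.
have Hey : omega e y = 1 by rewrite -E1 /y; case: HS1 => _ [_ ->].
have Hye : omega y e = -1 by rewrite omegaC Hey.
(* It remains to move [y] to [f] while fixing [e]. *)
have move_fix_e (y1 y2 : vec n.+1) : omega y1 e = omega y2 e ->
    transvection (vsub y2 y1) (omega y2 y1)^-1 e = e.
  by move=> H; apply: transvection_fix; rewrite omegaDl omegaNl H subrr.
suff [S [HS Se Sy]] : exists S, [/\ linear_symplecto S, S e = e & S y = f].
  by exists (fun x => S (S1 x)); split; [apply: linsymp_comp | rewrite E1 | ].
have [Hfy|Hfy] := eqVneq (omega f y) 0; last first.
  exists (transvection (vsub f y) (omega f y)^-1).
  split; [exact: transvection_linsymp | | exact: transvection_move].
  by apply: move_fix_e; rewrite Hye Hfe.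
set z := vadd e f.
have Hzy : omega z y != 0 by rewrite omegaDl Hey Hfy addr0 oner_eq0.
have Hze : omega z e = -1 by rewrite omegaDl omegavv Hfe add0r.
have Hfz : omega f z != 0 by rewrite omegaDr Hfe omegavv addr0 oppr_eq0 oner_eq0.
exists (fun x => transvection (vsub f z) (omega f z)^-1
                  (transvection (vsub z y) (omega z y)^-1 x)).
split; first exact: linsymp_comp (transvection_linsymp _ _) (transvection_linsymp _ _).
  by rewrite move_fix_e ?Hye ?Hze // move_fix_e // Hze Hfe.
by rewrite !transvection_move.
Qed.

End Symplectomorphisms.
Arguments linsymp_id {K} n.

Section Lagrangian.
Variable K : fieldType.
Local Notation vec := (vec K).

Lemma lagP n m (D : relation K n m) x y : is_lagrangian_subspace D ->
  D x y <-> forall a b, D a b -> omega x a = omega y b.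
Proof.
case=> _ HD; rewrite HD; split=> H a b Dab; apply/eqP; have := H a b Dab.
  by rewrite /rel_form => /eqP; rewrite subr_eq0.
by move=> /eqP; rewrite /rel_form subr_eq0.
Qed.

Lemma lag_notin n m (D : relation K n m) x y : is_lagrangian_subspace D ->
  ~ D x y -> exists a b, D a b /\ omega x a != omega y b.
Proof.
move=> HD Nxy; apply: NNPP => C; apply/Nxy/(lagP _ _ HD) => a b Dab.
by apply/eqP; apply: negbNE; apply/negP => E; apply: C; exists a, b.
Qed.

Lemma lag_pullback n m (D : relation K n m) S T :
  linear_symplecto S -> linear_symplecto T -> is_lagrangian_subspace D ->
  is_lagrangian_subspace (fun x y => D (S x) (T y)).
Proof.
move=> HS HT HD; have [Si [_ _ SiK]] := linsymp_inverse HS.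
have [Ti [_ _ TiK]] := linsymp_inverse HT.
case: HS HT => _ [[addS scaleS] omS] [_ [[addT scaleT] omT]].
have [[D0 [addD scaleD]] _] := HD.
split; first split.
- by rewrite (linmap0 (conj addS scaleS)) (linmap0 (conj addT scaleT)).
- split; first by move=> v w v' w' Dv Dw; rewrite addS addT; apply: addD.
  by move=> a v v' Dv; rewrite scaleS scaleT; apply: scaleD.
move=> x y; split.
  by move=> Dxy a b Dab; rewrite /rel_form -omS -omT (proj1 (lagP _ _ HD) Dxy _ _ Dab) subrr.
move=> H; apply/(lagP _ _ HD) => a b Dab.
have := H (Si a) (Ti b); rewrite SiK TiK /rel_form => /(_ Dab) /eqP.
rewrite subr_eq0 => /eqP E.
by rewrite -[a]SiK -[b]TiK omS omT.
Qed.

Lemma lag_transpose n m (D : relation K n m) :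
  is_lagrangian_subspace D -> is_lagrangian_subspace (fun w v => D v w).
Proof.
move=> HD; have [[D0 [addD scaleD]] _] := HD.
split; first split => //.
  by split => *; [apply: addD | apply: scaleD].
move=> y x /=; rewrite (lagP _ _ HD) /rel_form.
split=> [H b a Dab | H a b Dab]; first by rewrite (H a b Dab) subrr.
by apply/eqP; rewrite eq_sym -subr_eq0; apply/eqP/H.
Qed.

Definition linear_normal_form n m (D : relation K n m) :=
  exists k (S : vec n -> vec n) (T : vec m -> vec m),
    [/\ (k <= minn n m)%N, linear_symplecto S, linear_symplecto T &
        forall v w, D v w <-> normal_form k S T v w].

Lemma linear_normal_form_pullback n m (D : relation K n m) S T :
  linear_symplecto S -> linear_symplecto T ->
  linear_normal_form (fun x y => D (S x) (T y)) -> linear_normal_form D.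
Proof.
move=> HS HT [k [S' [T' [Hk HS' HT' HD]]]].
have [Si [HSi SK SiK]] := linsymp_inverse HS.
have [Ti [HTi TK TiK]] := linsymp_inverse HT.
exists k, (fun v => S' (Si v)), (fun u => T (T' u)); split => //.
- exact: linsymp_comp.
- exact: linsymp_comp.
move=> v w; rewrite -{1}(SiK v) -{1}(TiK w) HD.
split; case=> u [p [q [Hp [Hq [E1 E2]]]]]; exists u, p, q; do !split => //.
  by rewrite -E2 TiK.
by rewrite E2 TK.
Qed.

Lemma linear_normal_form_transpose n m (D : relation K n m) :
  linear_normal_form (fun w v => D v w) -> linear_normal_form D.
Proof.
case=> k [S [T [Hk HS HT HD]]].
have [Si [HSi SK SiK]] := linsymp_inverse HS.
have [Ti [HTi TK TiK]] := linsymp_inverse HT.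
exists k, Ti, Si; split; rewrite 1?minnC // => v w; rewrite HD.
split; case=> u [p [q [Hp [Hq [E1 E2]]]]]; exists u, q, p; do !split => //.
- by rewrite E2 TK.
- by rewrite -E1 SK.
- by rewrite E2 SiK.
- by rewrite -E1 TiK.
Qed.

End Lagrangian.

Section LastCoordinate.
Variable K : fieldType.
Local Notation vec := (vec K).
Local Notation vz := (@vzero K _).

Lemma vget_vcat k l n (u : vec k) (q : vec l) i : (i < n)%N ->
  vget (@vcat K k l n u q) i = if (i < k)%N then vget u i else vget q (i - k).
Proof.
move=> Hi; rewrite {1}/vget; case: insubP => [j _ <-|]; last by rewrite Hi.
rewrite /vcat; case: (ltnP j k) => Hjk.
  by rewrite /vget; case: insubP => [a _ _ //|]; rewrite Hjk.
by rewrite insubN // -leqNgt.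
Qed.

Lemma zc_vcat k l n (u : vec k) (q : vec l) i : (i < n)%N ->
  zc (@vcat K k l n u q) i = if (i < k)%N then zc u i else zc q (i - k).
Proof. by move=> Hi; rewrite /zc vget_vcat //; case: ifP. Qed.
Lemma xc_vcat k l n (u : vec k) (q : vec l) i : (i < n)%N ->
  xc (@vcat K k l n u q) i = if (i < k)%N then xc u i else xc q (i - k).
Proof. by move=> Hi; rewrite /xc vget_vcat //; case: ifP. Qed.

Lemma inP_zc r (q : vec r) : inP q <-> forall i, zc q i = 0.
Proof.
split=> [H i|H j]; last by rewrite -(H j) /zc vgetE.
case: (ltnP i r) => Hi; last exact: zc_out.
by rewrite /zc -[i]/(val (Ordinal Hi)) vgetE H.
Qed.

Definition vresize n N (x : vec N) : vec n := vmk n (zc x) (xc x).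
Arguments vresize n {N} x.

Lemma zc_vresize n N (x : vec N) i :
  zc (vresize n x) i = if (i < n)%N then zc x i else 0.
Proof. exact: zc_vmk. Qed.
Lemma xc_vresize n N (x : vec N) i :
  xc (vresize n x) i = if (i < n)%N then xc x i else 0.
Proof. exact: xc_vmk. Qed.

Lemma vresizeD n N (x y : vec N) :
  vresize n (vadd x y) = vadd (vresize n x) (vresize n y).
Proof. by apply: vec_ext => i Hi; rewrite !coordE ?zc_vresize ?xc_vresize Hi !coordE. Qed.
Lemma vresizeZ n N a (x : vec N) : vresize n (vscale a x) = vscale a (vresize n x).
Proof. by apply: vec_ext => i Hi; rewrite !coordE ?zc_vresize ?xc_vresize Hi !coordE. Qed.
Lemma vresize0 n N : vresize n (@vzero K N) = vz.
Proof. by apply: vec_ext => i Hi; rewrite !coordE ?zc_vresize ?xc_vresize Hi !coordE. Qed.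
Lemma vresizeK n (x : vec n) : vresize n (vresize n.+1 x) = x.
Proof. by apply: vec_ext => i Hi; rewrite ?zc_vresize ?xc_vresize Hi ltnS ltnW. Qed.

Lemma omega_last n (x y : vec n.+1) :
  omega x y = omega (vresize n x) (vresize n y) + (zc x n * xc y n - xc x n * zc y n).
Proof.
rewrite !omega_coord big_ord_recr /=; congr (_ + _).
by apply: eq_bigr => i _; rewrite !zc_vresize !xc_vresize ltn_ord.
Qed.

Lemma vec_ext_last n (y z : vec n.+1) : vresize n y = vresize n z ->
  zc y n = zc z n -> xc y n = xc z n -> y = z.
Proof.
move=> E Ez Ex; apply: vec_ext => i Hi; case: (ltnP i n) => Hin.
- by have := f_equal (fun v => zc v i) E; rewrite !zc_vresize Hin.
- by have -> : i = n by lia.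
- by have := f_equal (fun v => xc v i) E; rewrite !xc_vresize Hin.
- by have -> : i = n by lia.
Qed.

Lemma omega_vresizeS n (x a : vec n) :
  omega (vresize n.+1 x) (vresize n.+1 a) = omega x a.
Proof.
rewrite omega_last !vresizeK !zc_vresize !xc_vresize ltnSn.
by rewrite !zc_out // !xc_out //; ring.
Qed.

Lemma vdecomp_last n (x : vec n.+1) : zc x n = 0 ->
  x = vadd (vresize n.+1 (vresize n x)) (vscale (xc x n) (xunit n.+1 n)).
Proof.
move=> H; apply: vec_ext_last.
- apply: vec_ext => i Hi;
    rewrite ?zc_vresize ?xc_vresize Hi !coordE ?zc_vresize ?xc_vresize /xunit ?zc_vmk ?xc_vmk.
    by rewrite ltnS ltnW // Hi; ring.
  by rewrite ltnS ltnW // Hi (ltn_eqF Hi) /=; ring.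
- by rewrite !coordE !zc_vresize ltnSn ltnn /xunit zc_vmk ltnSn H; ring.
- by rewrite !coordE !xc_vresize ltnSn ltnn /xunit xc_vmk ltnSn eqxx /=; ring.
Qed.

Section KernelSplit.
Variables (n m : nat) (D : relation K n.+1 m).
Hypotheses (HD : is_lagrangian_subspace D) (Dker : D (xunit n.+1 n) vz).

Lemma lag_kernel_last x y :
  D x y <-> zc x n = 0 /\ D (vresize n.+1 (vresize n x)) y.
Proof.
have [[_ [addD scaleD]] _] := HD.
have vadd_scale0 a (w : vec m) : vadd w (vscale a vz) = w.
  by apply: vec_ext => i _; rewrite !coordE; ring.
split=> [Dxy|[Hx Dx]].
  have Hx : zc x n = 0.
    by have := proj1 (lagP _ _ HD) Dxy _ _ Dker; rewrite omega_xunit // omega0r.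
  split => //; have := addD _ _ _ _ Dxy (scaleD (- xc x n) _ _ Dker).
  rewrite vadd_scale0; congr D; rewrite {1}(vdecomp_last Hx).
  by apply: vec_ext => i _; rewrite !coordE; ring.
rewrite (vdecomp_last Hx) -(vadd_scale0 (xc x n) y).
exact: addD _ _ _ _ Dx (scaleD _ _ _ Dker).
Qed.

Lemma lag_kernel_restrict :
  is_lagrangian_subspace (fun (x : vec n) y => D (vresize n.+1 x) y).
Proof.
have [[D0 [addD scaleD]] _] := HD.
split; first split.
- by rewrite vresize0.
- split; first by move=> v w v' w' Dv Dw; rewrite vresizeD; apply: addD.
  by move=> a v v' Dv; rewrite vresizeZ; apply: scaleD.
move=> x y /=; split.
  move=> Dxy a b Dab; rewrite /rel_form -omega_vresizeS.
  by rewrite (proj1 (lagP _ _ HD) Dxy _ _ Dab) subrr.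
move=> H; apply/(lagP _ _ HD) => a b Dab.
have [Ha Da] := proj1 (lag_kernel_last a b) Dab.
have /eqP := H (vresize n a) b Da; rewrite subr_eq0 => /eqP <-.
rewrite {1}(vdecomp_last Ha) omegaDr omegaZr omega_xunit //.
by rewrite zc_vresize ltnSn zc_out // mulr0 addr0 omega_vresizeS.
Qed.

End KernelSplit.

Definition map_init n (S : vec n -> vec n) (x : vec n.+1) : vec n.+1 :=
  vmk n.+1 (fun i => if (i < n)%N then zc (S (vresize n x)) i else zc x i)
           (fun i => if (i < n)%N then xc (S (vresize n x)) i else xc x i).

Lemma vresize_map_init n S (x : vec n.+1) : vresize n (map_init S x) = S (vresize n x).
Proof.
apply: vec_ext => i Hi.
  by rewrite zc_vresize Hi /map_init zc_vmk (leqW Hi) Hi.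
by rewrite xc_vresize Hi /map_init xc_vmk (leqW Hi) Hi.
Qed.
Lemma zc_map_init n S (x : vec n.+1) : zc (map_init S x) n = zc x n.
Proof. by rewrite zc_vmk ltnSn ltnn. Qed.
Lemma xc_map_init n S (x : vec n.+1) : xc (map_init S x) n = xc x n.
Proof. by rewrite xc_vmk ltnSn ltnn. Qed.

Lemma map_init_linsymp n (S : vec n -> vec n) :
  linear_symplecto S -> linear_symplecto (map_init S).
Proof.
move=> HS; have [Si [_ SK SiK]] := linsymp_inverse HS.
case: HS => _ [[addS scaleS] omS]; split.
  by exists (map_init Si) => x; apply: vec_ext_last;
    rewrite ?vresize_map_init ?zc_map_init ?xc_map_init ?SK ?SiK.
split; first split.
- move=> v w; apply: vec_ext_last.
  + by rewrite vresizeD !vresize_map_init vresizeD addS.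
  + by rewrite zc_vadd !zc_map_init zc_vadd.
  + by rewrite xc_vadd !xc_map_init xc_vadd.
- move=> a v; apply: vec_ext_last.
  + by rewrite vresizeZ !vresize_map_init vresizeZ scaleS.
  + by rewrite zc_vscale !zc_map_init zc_vscale.
  + by rewrite xc_vscale !xc_map_init xc_vscale.
by move=> v w; rewrite omega_last !vresize_map_init omS !zc_map_init !xc_map_init -omega_last.
Qed.

Lemma normal_form_map_init n m k (S : vec n -> vec n) (T : vec m -> vec m)
    (x : vec n.+1) w : (k <= n)%N ->
  (zc x n = 0 /\ normal_form k S T (vresize n x) w) <-> normal_form k (map_init S) T x w.
Proof.
move=> Hk; have zc_lt (N : nat) (y : vec N) i : (i < n)%N -> zc y i = zc (vresize n y) i.
  by move=> Hi; rewrite zc_vresize Hi.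
have xc_lt (N : nat) (y : vec N) i : (i < n)%N -> xc y i = xc (vresize n y) i.
  by move=> Hi; rewrite xc_vresize Hi.
split.
  case=> Hx [u [p [q [Hp [/inP_zc Hq [E1 E2]]]]]].
  exists u, p, (vmk (n.+1 - k) (fun i => zc (map_init S x) (i + k))
                               (fun i => xc (map_init S x) (i + k))).
  split => //; split.
    apply/inP_zc => i; rewrite zc_vmk; case: ifP => // Hi.
    case: (ltnP (i + k) n) => Hik.
      rewrite (zc_lt _ _ _ Hik) vresize_map_init E1 zc_vcat // ifF; last by apply/negP; lia.
      by rewrite addnK Hq.
    have -> : (i + k = n)%N by lia.
    by rewrite zc_map_init Hx.
  split => //; apply: vec_ext => i Hi; rewrite ?zc_vcat ?xc_vcat //; case: ifP => Hik.
  - by rewrite (zc_lt _ _ _ (leq_trans Hik Hk)) vresize_map_init E1 zc_vcat ?Hik //; lia.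
  - by rewrite zc_vmk ifT ?subnK //; lia.
  - by rewrite (xc_lt _ _ _ (leq_trans Hik Hk)) vresize_map_init E1 xc_vcat ?Hik //; lia.
  - by rewrite xc_vmk ifT ?subnK //; lia.
case=> u [p [q [Hp [/inP_zc Hq [E1 E2]]]]]; split.
  by rewrite -(zc_map_init S) E1 zc_vcat // ifF ?Hq //; apply/negP; lia.
exists u, p, (vmk (n - k) (zc q) (xc q)); split => //; split.
  by apply/inP_zc => i; rewrite zc_vmk Hq; case: ifP.
split => //; rewrite -vresize_map_init E1; apply: vec_ext => i Hi.
  rewrite zc_vresize Hi !zc_vcat //; last lia.
  by case: ifP => // Hik; rewrite zc_vmk ifT //; lia.
rewrite xc_vresize Hi !xc_vcat //; last lia.
by case: ifP => // Hik; rewrite xc_vmk ifT //; lia.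
Qed.

End LastCoordinate.
Arguments vresize {K} n {N} x.

Section FirstCoordinate.
Variable K : fieldType.
Local Notation vec := (vec K).
Local Notation vz := (@vzero K _).

Definition vbehead n (x : vec n.+1) : vec n :=
  vmk n (fun i => zc x i.+1) (fun i => xc x i.+1).
Definition vshift n (x : vec n) : vec n.+1 :=
  vmk n.+1 (fun i => if i is i'.+1 then zc x i' else 0)
           (fun i => if i is i'.+1 then xc x i' else 0).

Lemma zc_vbehead n (x : vec n.+1) i : zc (vbehead x) i = zc x i.+1.
Proof. by rewrite zc_vmk; case: ltnP => // H; rewrite zc_out. Qed.
Lemma xc_vbehead n (x : vec n.+1) i : xc (vbehead x) i = xc x i.+1.
Proof. by rewrite xc_vmk; case: ltnP => // H; rewrite xc_out. Qed.
Lemma zc_vshift n (x : vec n) i : zc (vshift x) i = if i is i'.+1 then zc x i' else 0.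
Proof. by rewrite zc_vmk; case: ltnP => //; case: i => // i H; rewrite zc_out. Qed.
Lemma xc_vshift n (x : vec n) i : xc (vshift x) i = if i is i'.+1 then xc x i' else 0.
Proof. by rewrite xc_vmk; case: ltnP => //; case: i => // i H; rewrite xc_out. Qed.

Definition shiftE := (zc_vbehead, xc_vbehead, zc_vshift, xc_vshift, coordE).

Lemma vshiftK n : cancel (@vshift n) (@vbehead n).
Proof. by move=> x; apply: vec_ext => i _; rewrite !shiftE. Qed.
Lemma vshiftD n (x y : vec n) : vshift (vadd x y) = vadd (vshift x) (vshift y).
Proof. by apply: vec_ext => [] [|i] _; rewrite !shiftE // addr0. Qed.
Lemma vshiftZ n a (x : vec n) : vshift (vscale a x) = vscale a (vshift x).
Proof. by apply: vec_ext => [] [|i] _; rewrite !shiftE // mulr0. Qed.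
Lemma vshift0 n : vshift (@vzero K n) = vz.
Proof. by apply: vec_ext => [] [|i] _; rewrite !shiftE. Qed.
Lemma vbeheadD n (x y : vec n.+1) : vbehead (vadd x y) = vadd (vbehead x) (vbehead y).
Proof. by apply: vec_ext => i _; rewrite !shiftE. Qed.
Lemma vbeheadZ n a (x : vec n.+1) : vbehead (vscale a x) = vscale a (vbehead x).
Proof. by apply: vec_ext => i _; rewrite !shiftE. Qed.

Lemma omega_first n (x y : vec n.+1) :
  omega x y = (zc x 0 * xc y 0 - xc x 0 * zc y 0) + omega (vbehead x) (vbehead y).
Proof.
rewrite !omega_coord big_ord_recl; congr (_ + _).
by apply: eq_bigr => i _; rewrite !shiftE.
Qed.

Lemma vec_ext_first n (y z : vec n.+1) : vbehead y = vbehead z ->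
  zc y 0 = zc z 0 -> xc y 0 = xc z 0 -> y = z.
Proof.
move=> E Ez Ex; apply: vec_ext => [] [|i] Hi //.
- by have := f_equal (fun v => zc v i) E; rewrite !shiftE.
- by have := f_equal (fun v => xc v i) E; rewrite !shiftE.
Qed.

Lemma omega_vshift n (x a : vec n) : omega (vshift x) (vshift a) = omega x a.
Proof. by rewrite omega_first !vshiftK !shiftE; ring. Qed.

Definition vhead n (a b : K) : vec n.+1 :=
  vadd (vscale a (zunit n.+1 0)) (vscale b (xunit n.+1 0)).
Arguments vhead : clear implicits.

Lemma vdecomp_first n (x : vec n.+1) :
  x = vadd (vshift (vbehead x)) (vhead n (zc x 0) (xc x 0)).
Proof.
by apply: vec_ext => [] [|i] Hi; rewrite !shiftE /zunit /xunit ?zc_vmk ?xc_vmk Hi /=; ring.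
Qed.
Lemma vshift_behead n (x : vec n.+1) :
  vshift (vbehead x) = vadd x (vhead n (- zc x 0) (- xc x 0)).
Proof.
by apply: vec_ext => [] [|i] Hi; rewrite !shiftE /zunit /xunit ?zc_vmk ?xc_vmk Hi /=; ring.
Qed.

Lemma omega_vshift_vhead n (x : vec n) a b : omega (vshift x) (vhead n a b) = 0.
Proof.
by rewrite /vhead omegaDr !omegaZr omega_zunit // omega_xunit // !shiftE /=; ring.
Qed.

Section IdentitySplit.
Variables (n m : nat) (D : relation K n.+1 m.+1).
Hypotheses (HD : is_lagrangian_subspace D)
  (De : D (zunit n.+1 0) (zunit m.+1 0)) (Df : D (xunit n.+1 0) (xunit m.+1 0)).

Lemma lag_identity_first x y : D x y <->
  [/\ zc x 0 = zc y 0, xc x 0 = xc y 0 & D (vshift (vbehead x)) (vshift (vbehead y))].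
Proof.
have [[_ [addD scaleD]] _] := HD.
have Dhead : forall x' y' a b,
    D x' y' -> D (vadd x' (vhead n a b)) (vadd y' (vhead m a b)).
  by move=> x' y' a b Dxy; apply: (addD) => //; apply: (addD); apply: (scaleD).
split=> [Dxy|[Ez Ex Dxy]].
  have := proj1 (lagP _ _ HD) Dxy _ _ De; rewrite !omega_zunit // => /oppr_inj Ex.
  have := proj1 (lagP _ _ HD) Dxy _ _ Df; rewrite !omega_xunit // => Ez.
  by split => //; rewrite !vshift_behead Ez Ex; apply: Dhead.
by rewrite (vdecomp_first x) (vdecomp_first y) Ez Ex; apply: Dhead.
Qed.

Lemma lag_identity_restrict :
  is_lagrangian_subspace (fun (x : vec n) (y : vec m) => D (vshift x) (vshift y)).
Proof.
have [[D0 [addD scaleD]] _] := HD.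
split; first split.
- by rewrite !vshift0.
- split; first by move=> v w v' w' Dv Dw; rewrite !vshiftD; apply: addD.
  by move=> a v v' Dv; rewrite !vshiftZ; apply: scaleD.
move=> x y /=; split.
  move=> Dxy a b Dab; rewrite /rel_form -omega_vshift -(omega_vshift y).
  by rewrite (proj1 (lagP _ _ HD) Dxy _ _ Dab) subrr.
move=> H; apply/(lagP _ _ HD) => a b Dab.
have [Ez Ex Da] := proj1 (lag_identity_first a b) Dab.
have /eqP := H (vbehead a) (vbehead b) Da; rewrite subr_eq0 => /eqP E.
rewrite (vdecomp_first a) (vdecomp_first b).
by rewrite !(omegaDr, omega_vshift_vhead, addr0) !omega_vshift.
Qed.

End IdentitySplit.

Definition map_tail n (S : vec n -> vec n) (x : vec n.+1) : vec n.+1 :=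
  vmk n.+1 (fun i => if i is i'.+1 then zc (S (vbehead x)) i' else zc x 0)
           (fun i => if i is i'.+1 then xc (S (vbehead x)) i' else xc x 0).

Lemma vbehead_map_tail n S (x : vec n.+1) : vbehead (map_tail S x) = S (vbehead x).
Proof. by apply: vec_ext => i Hi; rewrite !shiftE /map_tail ?zc_vmk ?xc_vmk /= ltnS Hi. Qed.
Lemma zc_map_tail n S (x : vec n.+1) : zc (map_tail S x) 0 = zc x 0.
Proof. by rewrite zc_vmk. Qed.
Lemma xc_map_tail n S (x : vec n.+1) : xc (map_tail S x) 0 = xc x 0.
Proof. by rewrite xc_vmk. Qed.

Lemma map_tail_linsymp n (S : vec n -> vec n) :
  linear_symplecto S -> linear_symplecto (map_tail S).
Proof.
move=> HS; have [Si [_ SK SiK]] := linsymp_inverse HS.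
case: HS => _ [[addS scaleS] omS]; split.
  by exists (map_tail Si) => x; apply: vec_ext_first;
    rewrite ?vbehead_map_tail ?zc_map_tail ?xc_map_tail ?SK ?SiK.
split; first split.
- move=> v w; apply: vec_ext_first.
  + by rewrite vbeheadD !vbehead_map_tail vbeheadD addS.
  + by rewrite zc_vadd !zc_map_tail zc_vadd.
  + by rewrite xc_vadd !xc_map_tail xc_vadd.
- move=> a v; apply: vec_ext_first.
  + by rewrite vbeheadZ !vbehead_map_tail vbeheadZ scaleS.
  + by rewrite zc_vscale !zc_map_tail zc_vscale.
  + by rewrite xc_vscale !xc_map_tail xc_vscale.
by move=> v w; rewrite omega_first !vbehead_map_tail omS !zc_map_tail !xc_map_tail -omega_first.
Qed.

(* [vmk l (zc q) (xc q)] retypes [q : vec l'] as a vector of length [l = l'];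
   it is needed because [n.+1 - k.+1] and [n - k] are only propositionally equal. *)
Lemma zc_recast l l' (q : vec l') : l = l' -> forall j, zc (vmk l (zc q) (xc q)) j = zc q j.
Proof. by move=> -> j; rewrite zc_vmk; case: ltnP => // H; rewrite zc_out. Qed.
Lemma xc_recast l l' (q : vec l') : l = l' -> forall j, xc (vmk l (zc q) (xc q)) j = xc q j.
Proof. by move=> -> j; rewrite xc_vmk; case: ltnP => // H; rewrite xc_out. Qed.

Lemma inP_recast l l' (q : vec l') : l = l' -> inP q -> inP (vmk l (zc q) (xc q)).
Proof. by move=> E /inP_zc Hq; apply/inP_zc => j; rewrite zc_recast. Qed.

Lemma vbehead_vcat k l l' n (u : vec k.+1) (q : vec l) (q' : vec l') :
  (forall j, zc q j = zc q' j) -> (forall j, xc q j = xc q' j) ->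
  vbehead (@vcat K k.+1 l n.+1 u q) = @vcat K k l' n (vbehead u) q'.
Proof.
move=> Hz Hx; apply: vec_ext => i Hi.
  by rewrite zc_vbehead !zc_vcat // ltnS; case: ifP => _; rewrite ?zc_vbehead ?subSS ?Hz.
by rewrite xc_vbehead !xc_vcat // ltnS; case: ifP => _; rewrite ?xc_vbehead ?subSS ?Hx.
Qed.

Lemma normal_form_map_tail n m k (S : vec n -> vec n) (T : vec m -> vec m)
    (x : vec n.+1) (y : vec m.+1) :
  [/\ zc x 0 = zc y 0, xc x 0 = xc y 0 & normal_form k S T (vbehead x) (vbehead y)] <->
  normal_form k.+1 (map_tail S) (map_tail T) x y.
Proof.
have Hn : (n.+1 - k.+1 = n - k)%N by rewrite subSS.
have Hm : (m.+1 - k.+1 = m - k)%N by rewrite subSS.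
split.
  case=> Ez Ex [u [p [q [Hp [Hq [E1 E2]]]]]].
  pose u' : vec k.+1 := vmk k.+1 (fun i => if i is i'.+1 then zc u i' else zc x 0)
                                (fun i => if i is i'.+1 then xc u i' else xc x 0).
  have Hu : vbehead u' = u.
    by apply: vec_ext => i Hi; rewrite !shiftE ?zc_vmk ?xc_vmk /= ltnS Hi.
  exists u', (vmk (m.+1 - k.+1) (zc p) (xc p)), (vmk (n.+1 - k.+1) (zc q) (xc q)).
  do 2 (split; first exact: inP_recast); split.
    apply: vec_ext_first.
    - by rewrite vbehead_map_tail E1 (@vbehead_vcat _ _ _ _ _ _ _ (zc_recast q Hn) (xc_recast q Hn)) Hu.
    - by rewrite zc_map_tail zc_vcat //= zc_vmk.
    - by rewrite xc_map_tail xc_vcat //= xc_vmk.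
  apply: vec_ext_first.
  - by rewrite vbehead_map_tail E2 (@vbehead_vcat _ _ _ _ _ _ _ (zc_recast p Hm) (xc_recast p Hm)) Hu.
  - by rewrite zc_map_tail zc_vcat //= zc_vmk.
  - by rewrite xc_map_tail xc_vcat //= xc_vmk.
case=> u [p [q [Hp [Hq [E1 E2]]]]]; split.
- by rewrite -(zc_map_tail S) E1 E2 zc_map_tail !zc_vcat.
- by rewrite -(xc_map_tail S) E1 E2 xc_map_tail !xc_vcat.
exists (vbehead u), (vmk (m - k) (zc p) (xc p)), (vmk (n - k) (zc q) (xc q)).
do 2 (split; first by apply: inP_recast); split.
  by rewrite -vbehead_map_tail E1; apply: vbehead_vcat => j; rewrite ?zc_recast ?xc_recast.
rewrite E2 vbehead_map_tail; congr T.
by apply: vbehead_vcat => j; rewrite ?zc_recast ?xc_recast.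
Qed.

End FirstCoordinate.

Section LinearNormalForm.
Variable K : fieldType.
Local Notation vec := (vec K).
Local Notation vz := (@vzero K _).

Lemma omega_vec0 (v w : vec 0) : omega v w = 0.
Proof. by rewrite /omega big_ord0. Qed.

Lemma linear_normal_form_nil (D : relation K 0 0) :
  is_lagrangian_subspace D -> linear_normal_form D.
Proof.
case=> [[D0 _] _]; exists 0%N, (fun v => v), (fun v => v).
split; [by [] | exact: linsymp_id | exact: linsymp_id | ].
move=> v w; rewrite (vec0_eq v) (vec0_eq w); split=> // _.
by exists vz, vz, vz; do !split; try by []; apply: vec_ext.
Qed.

Lemma lag_unit_pair n m (D : relation K n m) (x : vec n) :
  is_lagrangian_subspace D -> (forall v, D v vz -> v = vz) -> x <> vz ->
  exists v w v' w', [/\ D v w, D v' w', omega v v' = 1 & omega w w' = 1].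
Proof.
move=> HD kerD Hx; have [[_ [_ scaleD]] _] := HD.
have notker (y : vec n) : y <> vz -> ~ D y vz by move=> Hy /kerD.
have [a [b [Dab]]] := lag_notin HD (notker _ Hx); rewrite omega0l => Hxa.
have Ha : a <> vz by apply: (@omega_ne0_neq0 _ _ _ x); rewrite omegaC oppr_eq0.
have [a' [b' [Da'b']]] := lag_notin HD (notker _ Ha); rewrite omega0l => Haa'.
set c := (omega a a')^-1.
have Hv : omega a (vscale c a') = 1 by rewrite omegaZr mulVf.
exists a, b, (vscale c a'), (vscale c b'); split => //; first exact: scaleD.
by rewrite -(proj1 (lagP _ _ HD) Dab _ _ (scaleD c _ _ Da'b')).
Qed.

Section InductionSteps.
Variables n m : nat.
Hypothesis IH : forall D : relation K n m, is_lagrangian_subspace D -> linear_normal_form D.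

Lemma linear_normal_form_std_kernel (D : relation K n.+1 m) :
  is_lagrangian_subspace D -> D (xunit n.+1 n) vz -> linear_normal_form D.
Proof.
move=> HD Dker.
have [k [S [T [Hk HS HT HnfD]]]] := IH (lag_kernel_restrict HD Dker).
have Hkn : (k <= n)%N by move: Hk; rewrite leq_min => /andP [].
exists k, (map_init S), T; split; [lia | exact: map_init_linsymp | by [] | ].
move=> x y; rewrite (lag_kernel_last HD Dker) -normal_form_map_init //.
by split=> [] [Hx Dx]; split=> //; apply/HnfD.
Qed.

Lemma linear_normal_form_kernel (D : relation K n.+1 m) v :
  is_lagrangian_subspace D -> v <> vz -> D v vz -> linear_normal_form D.
Proof.
move=> HD Hv Dv.
have [S [HS Sf]] := linsymp_transitive (xunit_neq0 (ltnSn n)) Hv.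
apply: (linear_normal_form_pullback HS (linsymp_id m)).
apply: linear_normal_form_std_kernel; first exact: lag_pullback HS (linsymp_id m) HD.
by rewrite Sf.
Qed.

Lemma linear_normal_form_std_pair (D : relation K n.+1 m.+1) :
  is_lagrangian_subspace D -> D (zunit n.+1 0) (zunit m.+1 0) ->
  D (xunit n.+1 0) (xunit m.+1 0) -> linear_normal_form D.
Proof.
move=> HD De Df.
have [k [S [T [Hk HS HT HnfD]]]] := IH (lag_identity_restrict HD De Df).
exists k.+1, (map_tail S), (map_tail T).
split; [lia | exact: map_tail_linsymp | exact: map_tail_linsymp | ].
move=> x y; rewrite (lag_identity_first HD De Df) -normal_form_map_tail.
by split=> [] [Ez Ex Dxy]; split=> //; apply/HnfD.
Qed.

Lemma linear_normal_form_pair (D : relation K n.+1 m.+1) v w v' w' :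
  is_lagrangian_subspace D -> D v w -> D v' w' ->
  omega v v' = 1 -> omega w w' = 1 -> linear_normal_form D.
Proof.
move=> HD Dvw Dvw' Hvv Hww.
have [S [HS Sv Sv']] := linsymp_to_unit_pair Hvv.
have [T [HT Tw Tw']] := linsymp_to_unit_pair Hww.
have [Si [HSi SK _]] := linsymp_inverse HS.
have [Ti [HTi TK _]] := linsymp_inverse HT.
apply: (linear_normal_form_pullback HSi HTi).
apply: linear_normal_form_std_pair; first exact: lag_pullback.
- by rewrite -Sv -Tw SK TK.
- by rewrite -Sv' -Tw' SK TK.
Qed.

End InductionSteps.

Lemma linear_normal_form_exists n m (D : relation K n m) :
  is_lagrangian_subspace D -> linear_normal_form D.
Proof.
have [N] := ubnP (n + m); elim: N n m D => // N IHN n m D Hnm HD.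
have IH n' m' (D' : relation K n' m') : (n' + m' < n + m)%N ->
    is_lagrangian_subspace D' -> linear_normal_form D'.
  by move=> Hlt; apply: IHN; lia.
clear IHN Hnm.
have [[v Hv Dv]|N1] := classic (exists2 v, v <> vz & D v vz).
  case: n => [|n] in D HD v Hv Dv IH *; first by case: Hv; apply: vec0_eq.
  by apply: (linear_normal_form_kernel _ HD Hv Dv) => D' HD'; apply: IH.
have [[w Hw Dw]|N2] := classic (exists2 w, w <> vz & D vz w).
  apply: linear_normal_form_transpose.
  case: m => [|m] in D HD w Hw Dw N1 IH *; first by case: Hw; apply: vec0_eq.
  apply: (linear_normal_form_kernel _ (lag_transpose HD) Hw Dw) => D' HD'.
  by apply: IH => //; lia.
have kerD v : D v vz -> v = vz by move=> Dv; apply: NNPP => Hv; apply: N1; exists v.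
have kerDt w : D vz w -> w = vz by move=> Dw; apply: NNPP => Hw; apply: N2; exists w.
clear N1 N2.
case: n => [|n] in D HD kerD kerDt IH *.
  case: m => [|m] in D HD kerD kerDt IH *; first exact: linear_normal_form_nil.
  have [w [v [w' [v' [_ _ _]]]]] := lag_unit_pair (lag_transpose HD) kerDt (zunit_neq0 (ltn0Sn m)).
  by rewrite omega_vec0 => /eqP; rewrite eq_sym oner_eq0.
case: m => [|m] in D HD kerD kerDt IH *.
  have [v [w [v' [w' [_ _ _]]]]] := lag_unit_pair HD kerD (zunit_neq0 (ltn0Sn n)).
  by rewrite omega_vec0 => /eqP; rewrite eq_sym oner_eq0.
have [v [w [v' [w' [Dv Dv' Hvv Hww]]]]] := lag_unit_pair HD kerD (zunit_neq0 (ltn0Sn n)).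
by apply: (linear_normal_form_pair _ HD Dv Dv' Hvv Hww) => D' HD'; apply: IH => //; lia.
Qed.

End LinearNormalForm.

Section Affine.
Variables (K : fieldType) (n : nat).
Local Notation vec := (vec K n).

Lemma affsymp_translate_after (S : vec -> vec) c :
  linear_symplecto S -> affine_symplecto (fun v => vadd (S v) c).
Proof.
move=> HS; have [Si [_ SK SiK]] := linsymp_inverse HS.
have [_ [linS omS]] := HS; split; last by exists S, c.
by exists (fun y => Si (vadd y (vopp c))) => x; rewrite ?(vaddK, vaddNK, SK, SiK).
Qed.

Lemma affsymp_translate_before (S : vec -> vec) c :
  linear_symplecto S -> affine_symplecto (fun v => S (vadd v c)).
Proof.
move=> HS; have [Si [_ SK SiK]] := linsymp_inverse HS.
have [_ [[addS scaleS] omS]] := HS; split.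
  by exists (fun y => vadd (Si y) (vopp c)) => x; rewrite ?(vaddK, vaddNK, SK, SiK).
by exists S, (S c); split=> //; split=> // v; rewrite addS.
Qed.

End Affine.

Theorem mainTheorem1 (K : fieldType) (n m : nat) (L : relation K n m) :
  affine_lagrangian_relation L -> (exists v w, L v w) ->
  (exists (k : nat) (S : vec K n -> vec K n) (T : vec K m -> vec K m),
      (k <= minn n m)%N /\ affine_symplecto S /\ affine_symplecto T /\
      forall v w, L v w <-> normal_form k S T v w) /\
  (linear_lagrangian_relation L ->
   exists (k : nat) (S : vec K n -> vec K n) (T : vec K m -> vec K m),
      (k <= minn n m)%N /\ linear_symplecto S /\ linear_symplecto T /\
      forall v w, L v w <-> normal_form k S T v w).
Proof.
move=> HA [v0 [w0 L0]]; split; last first.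
  by move=> /linear_normal_form_exists [k [S [T [Hk HS HT HL]]]]; exists k, S, T.
case: HA => [Lempty|[a [a' [D [HD HLD]]]]]; first by case: (Lempty v0 w0).
have [k [S [T [Hk HS HT HnfD]]]] := linear_normal_form_exists HD.
exists k, (fun v => S (vadd v (vopp a))), (fun y => vadd (T y) a').
split=> //; split; first exact: affsymp_translate_before.
split; first exact: affsymp_translate_after.
move=> v w; rewrite HLD HnfD.
split; case=> u [p [q [Hp [Hq [E1 E2]]]]]; exists u, p, q; do !split => //.
  by rewrite -E2 vaddNK.
by rewrite E2 vaddK.
Qed.
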